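(* Let \(X\) be a nonempty set, let \((Q, \preccurlyeq_{Q})\) be a poset, and let \(d \colon X^{2} \to Q\) be a \(\preccurlyeq_{Q}\)-pseudoultrametric. Then there is a unique partial order \(\preccurlyeq_{Q}^{0}\) on \(Q\) such that \(d\) is a \(\preccurlyeq_{Q}^{0}\)-pseudoultrametric and \(\preccurlyeq_{Q}^{0} \subseteq \preccurlyeq\) holds whenever \(\preccurlyeq\) is a partial order on \(Q\) for which \(d\) is a \(\preccurlyeq\)-pseudoultrametric.
   Context: For a partial order \(\preccurlyeq\) on \(Q\), a mapping \(d\colon X^2\to Q\) is a \(\preccurlyeq\)-pseudoultrametric if \((Q,\preccurlyeq)\) has a smallest element \(q_0\), \(d\) is symmetric, \(d(x,x)=q_0\) for all \(x\in X\), and for every triple \(\langle x_1,x_2,x_3\rangle\) of points of \(X\) there is a permutation \((i_1,i_2,i_3)\) of \((1,2,3)\) with \(d(x_{i_1},x_{i_3})\preccurlyeq d(x_{i_1},x_{i_2})\) and \(d(x_{i_1},x_{i_2})=d(x_{i_2},x_{i_3})\). Partial orders are regarded as subsets of \(Q\times Q\). *)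

Definition rel (Q : Type) := Q -> Q -> Prop.

Definition rel_subset {Q : Type} (R S : rel Q) : Prop :=
  forall a b, R a b -> S a b.

Definition rel_eq {Q : Type} (R S : rel Q) : Prop :=
  forall a b, R a b <-> S a b.

Definition is_partial_order {Q : Type} (le : rel Q) : Prop :=
  (forall a, le a a) /\
  (forall a b, le a b -> le b a -> a = b) /\
  (forall a b c, le a b -> le b c -> le a c).

Definition is_smallest {Q : Type} (le : rel Q) (q0 : Q) : Prop :=
  forall q, le q0 q.

Definition pseudoultrametric {X Q : Type} (le : rel Q) (d : X -> X -> Q) : Prop :=
  exists q0 : Q,
    is_smallest le q0 /\
    (forall x y, d x y = d y x) /\
    (forall x, d x x = q0) /\
    (forall x1 x2 x3 : X,
       exists y1 y2 y3 : X,
         ((y1 = x1 /\ y2 = x2 /\ y3 = x3) \/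
          (y1 = x1 /\ y2 = x3 /\ y3 = x2) \/
          (y1 = x2 /\ y2 = x1 /\ y3 = x3) \/
          (y1 = x2 /\ y2 = x3 /\ y3 = x1) \/
          (y1 = x3 /\ y2 = x1 /\ y3 = x2) \/
          (y1 = x3 /\ y2 = x2 /\ y3 = x1)) /\
         le (d y1 y3) (d y1 y2) /\ d y1 y2 = d y2 y3).

(* Take for the minimal order the intersection of all partial orders for
   which d is a pseudoultrametric; the given order makes this family nonempty.
   The only point is that the intersection still satisfies the ultrametric
   triangle condition.  Choose the isosceles triangle witnessed by the given
   order, with base d y1 y3 and legs d y1 y2 = d y2 y3.  For any other
   admissible order, its own witness either makes the base equal to a leg or
   puts the base below the legs; so the base lies below the legs in every
   admissible order, hence in their intersection. *)


Section Intersection.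

Context {Q : Type}.

Definition rel_inter (P : rel Q -> Prop) : rel Q :=
  fun a b => forall le, P le -> le a b.

Lemma rel_inter_lb (P : rel Q -> Prop) (le : rel Q) :
  P le -> rel_subset (rel_inter P) le.
Proof. intros HP a b Hab; exact (Hab le HP). Qed.

Lemma rel_inter_glb (P : rel Q -> Prop) (R : rel Q) :
  (forall le, P le -> rel_subset R le) -> rel_subset R (rel_inter P).
Proof. intros HR a b Hab le HP; exact (HR le HP a b Hab). Qed.

Lemma rel_subset_antisym (R S : rel Q) :
  rel_subset R S -> rel_subset S R -> rel_eq R S.
Proof. intros HRS HSR a b; split; [apply HRS | apply HSR]. Qed.

Lemma is_partial_order_inter (P : rel Q -> Prop) (le' : rel Q) :
  P le' -> (forall le, P le -> is_partial_order le) ->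
  is_partial_order (rel_inter P).
Proof.
  intros HP' Hpo; split; [| split].
  - intros a le HP; apply (Hpo le HP).
  - intros a b Hab Hba; destruct (Hpo le' HP') as [_ [Hanti _]].
    exact (Hanti a b (Hab le' HP') (Hba le' HP')).
  - intros a b c Hab Hbc le HP; destruct (Hpo le HP) as [_ [_ Htrans]].
    exact (Htrans a b c (Hab le HP) (Hbc le HP)).
Qed.

End Intersection.

Section Pseudoultrametric.

Context {X Q : Type} (d : X -> X -> Q).

Lemma pseudoultrametric_smallest_diag (le : rel Q) (x : X) :
  pseudoultrametric le d -> is_smallest le (d x x).
Proof. intros [q0 [Hq0 [_ [Hdiag _]]]]; rewrite Hdiag; exact Hq0. Qed.

Lemma pseudoultrametric_isosceles_base_le (le : rel Q) (y1 y2 y3 : X) :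
  (forall a, le a a) -> pseudoultrametric le d ->
  d y1 y2 = d y2 y3 -> le (d y1 y3) (d y1 y2).
Proof.
  intros Hrefl [_ [_ [Hsym [_ Htri]]]] Hlegs.
  destruct (Htri y1 y2 y3) as [z1 [z2 [z3 [Hperm [Hle Heq]]]]].
  pose proof (Hsym y1 y2); pose proof (Hsym y1 y3); pose proof (Hsym y2 y3).
  assert (Hbase : d y1 y3 = d y1 y2 \/ le (d y1 y3) (d y1 y2)).
  { destruct Hperm as [[-> [-> ->]] | [[-> [-> ->]] | [[-> [-> ->]] |
                      [[-> [-> ->]] | [[-> [-> ->]] | [-> [-> ->]]]]]]];
      first [left; congruence | right; congruence]. }
  destruct Hbase as [-> | Hbase]; [apply Hrefl | exact Hbase].
Qed.

Lemma pseudoultrametric_inter (P : rel Q -> Prop) (le' : rel Q) :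
  inhabited X -> P le' -> pseudoultrametric le' d ->
  (forall le, P le -> (forall a, le a a) /\ pseudoultrametric le d) ->
  pseudoultrametric (rel_inter P) d.
Proof.
  intros [x] HP' Hd' HP.
  destruct Hd' as [q0 [_ [Hsym [Hdiag Htri]]]].
  exists (d x x); split; [| split; [exact Hsym | split]].
  - intros q le Hle.
    exact (pseudoultrametric_smallest_diag le x (proj2 (HP le Hle)) q).
  - intros y; rewrite !Hdiag; reflexivity.
  - intros x1 x2 x3.
    destruct (Htri x1 x2 x3) as [y1 [y2 [y3 [Hperm [_ Hlegs]]]]].
    exists y1, y2, y3; split; [exact Hperm | split; [| exact Hlegs]].
    intros le Hle; destruct (HP le Hle) as [Hrefl Hd].
    exact (pseudoultrametric_isosceles_base_le le y1 y2 y3 Hrefl Hd Hlegs).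
Qed.

End Pseudoultrametric.

Theorem proposition3p21 (X Q : Type) (leQ : Q -> Q -> Prop) (d : X -> X -> Q)
  (hX : inhabited X) (hleQ : is_partial_order leQ) (hd : pseudoultrametric leQ d) :
  exists le0 : Q -> Q -> Prop,
    (is_partial_order le0 /\ pseudoultrametric le0 d /\
     (forall le : Q -> Q -> Prop,
        is_partial_order le -> pseudoultrametric le d -> rel_subset le0 le)) /\
    (forall le1 : Q -> Q -> Prop,
       (is_partial_order le1 /\ pseudoultrametric le1 d /\
        (forall le : Q -> Q -> Prop,
           is_partial_order le -> pseudoultrametric le d -> rel_subset le1 le)) ->
       rel_eq le1 le0).
Proof.
  set (admissible := fun le : rel Q => is_partial_order le /\ pseudoultrametric le d).
  assert (HQ : admissible leQ) by (split; assumption).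
  exists (rel_inter admissible); split; [split; [| split] |].
  - exact (is_partial_order_inter admissible leQ HQ (fun le Hle => proj1 Hle)).
  - apply (pseudoultrametric_inter d admissible leQ hX HQ hd).
    intros le [Hpo Hd]; exact (conj (proj1 Hpo) Hd).
  - intros le Hpo Hd; exact (rel_inter_lb admissible le (conj Hpo Hd)).
  - intros le1 [Hpo1 [Hd1 Hleast1]]; apply rel_subset_antisym.
    + apply rel_inter_glb; intros le [Hpo Hd]; exact (Hleast1 le Hpo Hd).
    + exact (rel_inter_lb admissible le1 (conj Hpo1 Hd1)).
Qed.
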